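(* Let $A$ be a partially symmetric associative 0-dialgebra with involution. On $A\oplus A$ define $(a,b)\dashv(c,d)=(a\dashv c-d\vdash b^\ast,\; a^\ast\dashv d+c\vdash b)$, $(a,b)\vdash(c,d)=(a\vdash c-d\dashv b^\ast,\; a^\ast\vdash d+c\dashv b)$ and $(a,b)^\ast=(a^\ast,-b)$. Then $A\oplus A$ with these operations is a partially symmetric alternative 0-dialgebra with involution.
   Context: A 0-dialgebra with involution is a vector space with bilinear operations $\dashv,\vdash$ satisfying $a\dashv(b\dashv c)=a\dashv(b\vdash c)$ and $(a\dashv b)\vdash c=(a\vdash b)\vdash c$, together with a linear map $\ast$ with $(a^\ast)^\ast=a$, $(a\dashv b)^\ast=b^\ast\vdash a^\ast$, $(a\vdash b)^\ast=b^\ast\dashv a^\ast$. Write $\mathrm{sym}(x)=x+x^\ast$ and $\{x,y\}=x\dashv y-y\vdash x$; it is partially symmetric if $\{\mathrm{sym}(x),y\}=0$ and $\{x,\mathrm{sym}(y)\}=0$ for all $x,y$. Associators: $(a,b,c)_\dashv=(a\dashv b)\dashv c-a\dashv(b\dashv c)$, $(a,b,c)_\times=(a\vdash b)\dashv c-a\vdash(b\dashv c)$, $(a,b,c)_\vdash=(a\vdash b)\vdash c-a\vdash(b\vdash c)$. The 0-dialgebra is associative if all three associators vanish identically, and alternative if $(a,b,c)_\dashv+(c,b,a)_\vdash=0$, $(a,b,c)_\dashv-(b,c,a)_\vdash=0$ and $(a,b,c)_\times+(a,c,b)_\vdash=0$ for all $a,b,c$. *)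

From HB Require Import structures.
From mathcomp Require Import all_boot all_algebra.
Set Implicit Arguments. Unset Strict Implicit. Unset Printing Implicit Defensive.
Import GRing.Theory.
Local Open Scope ring_scope.

(* A vector space V over a field F, with two bilinear products
   lp ("a -| b") and rp ("a |- b") and a map s ("a^*"). *)
Section Dialg.
Variables (F : fieldType) (V : lmodType F).
Variables (lp rp : V -> V -> V) (s : V -> V).

Definition bilinear_op (op : V -> V -> V) : Prop :=
  (forall (k : F) (a b c : V), op (k *: a + b) c = k *: op a c + op b c) /\
  (forall (k : F) (a b c : V), op a (k *: b + c) = k *: op a b + op a c).

Definition is_0dialg_inv : Prop :=
  [/\ bilinear_op lp, bilinear_op rp,
      (forall a b c, lp a (lp b c) = lp a (rp b c)),
      (forall a b c, rp (lp a b) c = rp (rp a b) c) &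
      [/\ (forall (k : F) (a b : V), s (k *: a + b) = k *: s a + s b),
          (forall a, s (s a) = a),
          (forall a b, s (lp a b) = rp (s b) (s a)) &
          (forall a b, s (rp a b) = lp (s b) (s a))]].

Definition symv (x : V) : V := x + s x.
Definition dbrack (x y : V) : V := lp x y - rp y x.

Definition partially_symmetric : Prop :=
  (forall x y, dbrack (symv x) y = 0) /\ (forall x y, dbrack x (symv y) = 0).

Definition assoc_l (a b c : V) : V := lp (lp a b) c - lp a (lp b c).
Definition assoc_x (a b c : V) : V := lp (rp a b) c - rp a (lp b c).
Definition assoc_r (a b c : V) : V := rp (rp a b) c - rp a (rp b c).

Definition associative_0dialg : Prop :=
  forall a b c, [/\ assoc_l a b c = 0, assoc_x a b c = 0 & assoc_r a b c = 0].

Definition alternative_0dialg : Prop :=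
  forall a b c, [/\ assoc_l a b c + assoc_r c b a = 0,
                    assoc_l a b c - assoc_r b c a = 0 &
                    assoc_x a b c + assoc_r a c b = 0].
End Dialg.

Section Double.
Variables (F : fieldType) (V : lmodType F).
Variables (lp rp : V -> V -> V) (s : V -> V).

Definition dbl_lp (x y : V * V) : V * V :=
  (lp x.1 y.1 - rp y.2 (s x.2), lp (s x.1) y.2 + rp y.1 x.2).
Definition dbl_rp (x y : V * V) : V * V :=
  (rp x.1 y.1 - lp y.2 (s x.2), rp (s x.1) y.2 + lp y.1 x.2).
Definition dbl_s (x : V * V) : V * V := (s x.1, - x.2).
End Double.

From HB Require Import structures.
From mathcomp Require Import all_boot all_algebra ring.
Set Implicit Arguments. Unset Strict Implicit. Unset Printing Implicit Defensive.
Import GRing.Theory.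
Local Open Scope ring_scope.

(* In an associative 0-dialgebra every product of three elements equals one of
   x ⊣ (y ⊣ z), x ⊢ (y ⊣ z) or x ⊢ (y ⊢ z), and the involution permutes these shapes.
   Written componentwise, each identity to be checked on A ⊕ A thus becomes a linear
   relation between such normal words in the components and their involutes.  The
   dialgebra and involution axioms of the double hold identically.  Partial symmetry
   says that the bracket {x, y} = x ⊣ y - y ⊢ x changes sign when either argument is
   replaced by its involute; each component of an alternative identity of the double is
   a sum of at most five instances of this rule, possibly multiplied by a third element. *)

Section TrivialExtension.
Variables (F : fieldType) (V : lmodType F).

(* The trivial extension F ⋉ V, with (a, u) (b, v) = (a b, b u + a v). Embedding V
   into this commutative ring lets [ring] decide F-linear identities in V. *)
Definition triv_ext : Type := (F * V)%type.
HB.instance Definition _ := GRing.Zmodule.on triv_ext.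

Definition triv_mul (x y : triv_ext) : triv_ext := (x.1 * y.1, y.1 *: x.2 + x.1 *: y.2).

Lemma triv_mulA : associative triv_mul.
Proof.
move=> [a u] [b v] [c w]; rewrite /triv_mul /=; congr pair; first by rewrite mulrA.
by rewrite !scalerDr !scalerA addrA [c * b]mulrC [c * a]mulrC.
Qed.

Lemma triv_mulC : commutative triv_mul.
Proof. by move=> [a u] [b v]; rewrite /triv_mul /= mulrC addrC. Qed.

Lemma triv_mul1 : left_id (1, 0) triv_mul.
Proof. by move=> [a u]; rewrite /triv_mul /= mul1r scale1r scaler0 add0r. Qed.

Lemma triv_mulDl : left_distributive triv_mul +%R.
Proof.
move=> [a u] [b v] [c w]; rewrite /triv_mul /=; congr pair; first by rewrite mulrDl.
by rewrite scalerDr scalerDl addrACA.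
Qed.

Lemma triv_one_neq0 : (1, 0) != 0 :> triv_ext.
Proof. by apply/negP => /eqP [] /eqP; rewrite oner_eq0. Qed.

HB.instance Definition _ := GRing.Zmodule_isComNzRing.Build triv_ext
  triv_mulA triv_mulC triv_mul1 triv_mulDl triv_one_neq0.

Definition triv_inj (x : V) : triv_ext := (0, x).

Lemma triv_injD x y : triv_inj (x + y) = triv_inj x + triv_inj y.
Proof. by rewrite /triv_inj; congr pair; rewrite /= addr0. Qed.

Lemma triv_injN x : triv_inj (- x) = - triv_inj x.
Proof. by rewrite /triv_inj; congr pair; rewrite /= oppr0. Qed.

Lemma triv_inj0 : triv_inj 0 = 0.
Proof. by []. Qed.

Lemma triv_injZ (k : F) x : triv_inj (k *: x) = ((k, 0) : triv_ext) * triv_inj x.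
Proof.
by rewrite /triv_inj /GRing.mul /= /triv_mul /=; congr pair; rewrite /= ?mulr0 ?scaler0 ?add0r.
Qed.

Lemma triv_inj_inj : injective triv_inj.
Proof. by move=> x y []. Qed.

End TrivialExtension.

Ltac lmod_ring :=
  apply: triv_inj_inj; rewrite ?(triv_injD, triv_injN, triv_inj0, triv_injZ); ring.

Lemma eq0_addr_rel (V : zmodType) (x y z : V) : y = z -> x + (y - z) = 0 -> x = 0.
Proof. by move->; rewrite subrr addr0. Qed.

Lemma eq0_subr_rel (V : zmodType) (x y z : V) : y = z -> x - (y - z) = 0 -> x = 0.
Proof. by move->; rewrite subrr subr0. Qed.

Section BilinearOp.
Variables (F : fieldType) (V : lmodType F) (op : V -> V -> V).
Hypothesis op_bilin : bilinear_op op.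

Lemma bilinDl a b c : op (a + b) c = op a c + op b c.
Proof. by have := op_bilin.1 1 a b c; rewrite !scale1r. Qed.

Lemma bilinDr a b c : op a (b + c) = op a b + op a c.
Proof. by have := op_bilin.2 1 a b c; rewrite !scale1r. Qed.

Lemma bilin0l c : op 0 c = 0.
Proof. by apply: (addrI (op 0 c)); rewrite -bilinDl !addr0. Qed.

Lemma bilin0r a : op a 0 = 0.
Proof. by apply: (addrI (op a 0)); rewrite -bilinDr !addr0. Qed.

Lemma bilinZl k a c : op (k *: a) c = k *: op a c.
Proof. by have := op_bilin.1 k a 0 c; rewrite !addr0 bilin0l addr0. Qed.

Lemma bilinZr k a c : op a (k *: c) = k *: op a c.
Proof. by have := op_bilin.2 k a c 0; rewrite !addr0 bilin0r addr0. Qed.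

Lemma bilinNl a c : op (- a) c = - op a c.
Proof. by rewrite -scaleN1r bilinZl scaleN1r. Qed.

Lemma bilinNr a c : op a (- c) = - op a c.
Proof. by rewrite -scaleN1r bilinZr scaleN1r. Qed.

End BilinearOp.

Section LinearMap.
Variables (F : fieldType) (V : lmodType F) (f : V -> V).
Hypothesis f_lin : forall k a b, f (k *: a + b) = k *: f a + f b.

Lemma linD a b : f (a + b) = f a + f b.
Proof. by have := f_lin 1 a b; rewrite !scale1r. Qed.

Lemma lin0 : f 0 = 0.
Proof. by apply: (addrI (f 0)); rewrite -linD !addr0. Qed.

Lemma linZ k a : f (k *: a) = k *: f a.
Proof. by have := f_lin k a 0; rewrite !addr0 lin0 addr0. Qed.

Lemma linN a : f (- a) = - f a.
Proof. by rewrite -scaleN1r linZ scaleN1r. Qed.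

End LinearMap.

Section Doubling.
Variables (F : fieldType) (V : lmodType F) (lp rp : V -> V -> V) (s : V -> V).
Hypotheses (lp_bilin : bilinear_op lp) (rp_bilin : bilinear_op rp).
Hypotheses (dialg_lp : forall a b c, lp a (lp b c) = lp a (rp b c))
           (dialg_rp : forall a b c, rp (lp a b) c = rp (rp a b) c).
Hypothesis s_lin : forall k a b, s (k *: a + b) = k *: s a + s b.
Hypothesis sK : involutive s.
Hypotheses (s_lp : forall a b, s (lp a b) = rp (s b) (s a))
           (s_rp : forall a b, s (rp a b) = lp (s b) (s a)).
Hypothesis lp_rp_assoc : associative_0dialg lp rp.
Hypothesis lp_rp_psym : partially_symmetric lp rp s.

Lemma lpA a b c : lp a (lp b c) = lp (lp a b) c.
Proof. by case: (lp_rp_assoc a b c) => /eqP; rewrite subr_eq0 => /eqP. Qed.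

Lemma rp_lpA a b c : rp a (lp b c) = lp (rp a b) c.
Proof. by case: (lp_rp_assoc a b c) => _ /eqP; rewrite subr_eq0 => /eqP. Qed.

Lemma rpA a b c : rp a (rp b c) = rp (rp a b) c.
Proof. by case: (lp_rp_assoc a b c) => _ _ /eqP; rewrite subr_eq0 => /eqP. Qed.

Ltac dnorm :=
  rewrite /dbl_lp /dbl_rp /dbl_s /dbrack /symv /assoc_l /assoc_x /assoc_r /=;
  rewrite ?(bilinDl lp_bilin, bilinDr lp_bilin, bilinNl lp_bilin, bilinNr lp_bilin,
            bilinZl lp_bilin, bilinZr lp_bilin, bilin0l lp_bilin, bilin0r lp_bilin,
            bilinDl rp_bilin, bilinDr rp_bilin, bilinNl rp_bilin, bilinNr rp_bilin,
            bilinZl rp_bilin, bilinZr rp_bilin, bilin0l rp_bilin, bilin0r rp_bilin,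
            linD s_lin, linN s_lin, linZ s_lin, lin0 s_lin, sK, s_lp, s_rp,
            esym (lpA _ _ _), esym (dialg_lp _ _ _), esym (rp_lpA _ _ _),
            esym (rpA _ _ _), dialg_rp).

Lemma dbl_lp_bilin : bilinear_op (dbl_lp lp rp s).
Proof. by split=> k [a b] [c d] [e f]; dnorm; congr pair; lmod_ring. Qed.

Lemma dbl_rp_bilin : bilinear_op (dbl_rp lp rp s).
Proof. by split=> k [a b] [c d] [e f]; dnorm; congr pair; lmod_ring. Qed.

Lemma dbl_s_lin k (x y : V * V) : dbl_s s (k *: x + y) = k *: dbl_s s x + dbl_s s y.
Proof. by case: x y => [a b] [c d]; dnorm; congr pair; lmod_ring. Qed.

Lemma dbl_sK : involutive (dbl_s s).
Proof. by case=> a b; dnorm; rewrite opprK. Qed.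

Lemma dbl_s_lp x y : dbl_s s (dbl_lp lp rp s x y) = dbl_rp lp rp s (dbl_s s y) (dbl_s s x).
Proof. by case: x y => [a b] [c d]; dnorm; congr pair; lmod_ring. Qed.

Lemma dbl_s_rp x y : dbl_s s (dbl_rp lp rp s x y) = dbl_lp lp rp s (dbl_s s y) (dbl_s s x).
Proof. by case: x y => [a b] [c d]; dnorm; congr pair; lmod_ring. Qed.

Lemma dbl_dialg_lp x y z :
  dbl_lp lp rp s x (dbl_lp lp rp s y z) = dbl_lp lp rp s x (dbl_rp lp rp s y z).
Proof. by case: x y z => [a b] [c d] [e f]; dnorm; congr pair; lmod_ring. Qed.

Lemma dbl_dialg_rp x y z :
  dbl_rp lp rp s (dbl_lp lp rp s x y) z = dbl_rp lp rp s (dbl_rp lp rp s x y) z.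
Proof. by case: x y z => [a b] [c d] [e f]; dnorm; congr pair; lmod_ring. Qed.

Lemma dbrack_symvl x y : dbrack lp rp (symv s x) y = 0.
Proof. exact: lp_rp_psym.1. Qed.

Lemma dbrack_symvr x y : dbrack lp rp x (symv s y) = 0.
Proof. exact: lp_rp_psym.2. Qed.

Lemma dbrack_sC x y : dbrack lp rp (s x) y = dbrack lp rp x (s y).
Proof.
apply/eqP; rewrite -subr_eq0; apply/eqP.
apply: (eq0_subr_rel (dbrack_symvl x y)); apply: (eq0_addr_rel (dbrack_symvr x y)).
by dnorm; lmod_ring.
Qed.

Lemma dbrack_ss x y : dbrack lp rp (s x) (s y) = dbrack lp rp x y.
Proof.
apply/eqP; rewrite -subr_eq0; apply/eqP.
apply: (eq0_subr_rel (dbrack_symvl x (s y))); apply: (eq0_addr_rel (dbrack_symvr x y)).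
by dnorm; lmod_ring.
Qed.

Lemma dbl_psym : partially_symmetric (dbl_lp lp rp s) (dbl_rp lp rp s) (dbl_s s).
Proof.
split=> [] [a b] [c d]; dnorm; congr pair; try by lmod_ring.
- by apply: (eq0_subr_rel (dbrack_symvl a c)); dnorm; lmod_ring.
- by apply: (eq0_subr_rel (dbrack_symvr a c)); dnorm; lmod_ring.
Qed.

Lemma dbl_alt_left x y z :
  assoc_l (dbl_lp lp rp s) x y z + assoc_r (dbl_rp lp rp s) z y x = 0.
Proof.
case: x y z => [a b] [c d] [e f]; dnorm; congr pair.
- apply: (eq0_addr_rel (dbrack_symvl (lp b (s d)) e)).
  apply: (eq0_addr_rel (dbrack_symvl (lp b (s f)) (s c))).
  apply: (eq0_subr_rel (dbrack_symvr a (lp d (s f)))).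
  by dnorm; lmod_ring.
- apply: (eq0_addr_rel (congr1 (lp^~ f) (dbrack_ss a c))).
  apply: (eq0_addr_rel (congr1 (lp^~ d) (dbrack_sC a e))).
  apply: (eq0_subr_rel (congr1 (rp^~ b) (dbrack_ss c e))).
  by dnorm; lmod_ring.
Qed.

Lemma dbl_alt_cyc x y z :
  assoc_l (dbl_lp lp rp s) x y z - assoc_r (dbl_rp lp rp s) y z x = 0.
Proof.
case: x y z => [a b] [c d] [e f]; dnorm; congr pair.
- apply: (eq0_subr_rel (dbrack_symvl (lp b (s d)) (s e))).
  apply: (eq0_subr_rel (dbrack_symvr (lp b (s f)) c)).
  apply: (eq0_addr_rel (dbrack_symvl (lp b (s f)) (s c))).
  apply: (eq0_addr_rel (dbrack_symvr (rp d (s b)) e)).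
  by dnorm; lmod_ring.
- apply: (eq0_addr_rel (dbrack_symvr b (lp (s d) f))).
  apply: (eq0_addr_rel (congr1 (rp^~ b) (dbrack_sC d f))).
  apply: (eq0_addr_rel (congr1 (lp^~ f) (dbrack_symvl a (s c)))).
  apply: (eq0_addr_rel (congr1 (lp^~ d) (dbrack_symvl a e))).
  apply: (eq0_subr_rel (congr1 (rp^~ b) (dbrack_ss c e))).
  by dnorm; lmod_ring.
Qed.

Lemma dbl_alt_mid x y z :
  assoc_x (dbl_lp lp rp s) (dbl_rp lp rp s) x y z + assoc_r (dbl_rp lp rp s) x z y = 0.
Proof.
case: x y z => [a b] [c d] [e f]; dnorm; congr pair.
- apply: (eq0_addr_rel (dbrack_symvr (lp d (s b)) e)).
  apply: (eq0_addr_rel (dbrack_symvl (lp d (s f)) a)).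
  apply: (eq0_subr_rel (dbrack_symvl c (lp f (s b)))).
  by dnorm; lmod_ring.
- apply: (eq0_subr_rel (dbrack_symvl (lp (s d) f) b)).
  apply: (eq0_addr_rel (congr1 (lp^~ b) (dbrack_sC d f))).
  apply: (eq0_addr_rel (congr1 (rp^~ d) (dbrack_symvr (s a) e))).
  apply: (eq0_subr_rel (congr1 (lp^~ f) (dbrack_symvl c (s a)))).
  by dnorm; lmod_ring.
Qed.

End Doubling.

Theorem theorem5p9 (F : fieldType) (V : lmodType F)
    (lp rp : V -> V -> V) (s : V -> V) :
  is_0dialg_inv lp rp s ->
  partially_symmetric lp rp s ->
  associative_0dialg lp rp ->
  [/\ is_0dialg_inv (V := (V * V)%type) (dbl_lp lp rp s) (dbl_rp lp rp s) (dbl_s s),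
      partially_symmetric (dbl_lp lp rp s) (dbl_rp lp rp s) (dbl_s s) &
      alternative_0dialg (dbl_lp lp rp s) (dbl_rp lp rp s)].
Proof.
move=> [lp_bilin rp_bilin dialg_lp dialg_rp [s_lin sK s_lp s_rp]] psym assoc.
split.
- split; [exact: dbl_lp_bilin | exact: dbl_rp_bilin | exact: dbl_dialg_lp
         | exact: dbl_dialg_rp |].
  by split; [exact: dbl_s_lin | exact: dbl_sK | exact: dbl_s_lp | exact: dbl_s_rp].
- exact: dbl_psym.
- by move=> x y z; split; [exact: dbl_alt_left | exact: dbl_alt_cyc | exact: dbl_alt_mid].
Qed.
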